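(* Let $H=T\cup C_n$ be a Halin graph whose outer cycle $C_n$ has even length $n$. Then $AT(H)=3$.
   Context: All graphs are finite and simple. A Halin graph $H=T\cup C_n$ is a plane graph obtained from a plane tree $T$ having no vertex of degree two and at least one vertex of degree at least three, by adding a cycle $C_n$ (the outer cycle) that connects all the leaves of $T$ in the cyclic order determined by the planar drawing of $T$. For a digraph $D$, an Eulerian subdigraph is a spanning subdigraph (a subset of the arcs, possibly empty) in which every vertex has indegree equal to outdegree; it is even or odd according to the parity of its number of arcs. The Alon–Tarsi number $AT(G)$ is the smallest integer $k$ such that $G$ has an orientation $D$ with maximum outdegree at most $k-1$ for which the numbers of even and odd Eulerian subdigraphs of $D$ differ. *)

From mathcomp Require Import all_boot.
Set Implicit Arguments. Unset Strict Implicit. Unset Printing Implicit Defensive.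

Section Defs.
Variable V : finType.

Definition simple_rel (e : rel V) := symmetric e /\ irreflexive e.

Definition deg (e : rel V) (v : V) : nat := #|[set u | e v u]|.

Definition is_tree (t : rel V) :=
  [/\ simple_rel t,
      (forall x y : V, connect t x y) &
      (forall (x : V) (p : seq V), uniq (x :: p) -> 2 <= size p ->
           ~~ cycle t (x :: p))].

(* rotation system of the tree t: for each v, rot v cyclically permutes
   the neighbours of v (single orbit) *)
Definition rotation_system (t : rel V) (rot : V -> V -> V) :=
  forall v : V,
    (forall u, t v u -> t v (rot v u)) /\
    (forall u w, t v u -> t v w -> exists k, iter k (rot v) u = w).

(* boundary walk of the plane tree (single face): dart (u,v) is followed by
   (v, rot v u) *)
Definition dart_step (rot : V -> V -> V) (d : V * V) : V * V :=
  (d.2, rot d.2 d.1).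

Definition leaf_order (t : rel V) (rot : V -> V -> V) (d0 : V * V) : seq V :=
  [seq x <- map snd (traject (dart_step rot) d0 (2 * #|V|.-1)) | deg t x == 1].

Definition cyc_adj (c : seq V) (x y : V) : bool :=
  [&& x \in c, y \in c & (y == next c x) || (x == next c y)].

(* G = T ∪ C where T is a plane tree with no vertex of degree 2 and one
   vertex of degree >= 3, and C is the cycle through its leaves in the
   cyclic order given by a planar drawing (rotation system) of T. *)
Definition halin_decomp (G : rel V) (t : rel V) (c : seq V) :=
  [/\ is_tree t,
      (forall v, deg t v != 2) /\ (exists v, 3 <= deg t v),
      uniq c /\ (forall v, (v \in c) = (deg t v == 1)),
      (exists rot, rotation_system t rot /\
         exists d0 : V * V, t d0.1 d0.2 /\ leaf_order t rot d0 = c) &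
      (forall x y, G x y = t x y || cyc_adj c x y)].

Definition is_orientation (G D : rel V) :=
  forall x y, (D x y -> G x y) /\ (G x y -> D x y = ~~ D y x).

Definition outdeg (D : rel V) (v : V) : nat := #|[set u | D v u]|.

Definition eulerian_sub (D : rel V) (S : {set V * V}) : bool :=
  (S \subset [set a : V * V | D a.1 a.2]) &&
  [forall v, #|[set a in S | a.1 == v]| == #|[set a in S | a.2 == v]|].

Definition n_even_eulerian (D : rel V) : nat :=
  #|[set S : {set V * V} | eulerian_sub D S & ~~ odd #|S|]|.
Definition n_odd_eulerian (D : rel V) : nat :=
  #|[set S : {set V * V} | eulerian_sub D S & odd #|S|]|.

Definition AT_good (G : rel V) (k : nat) :=
  exists D : rel V, [/\ is_orientation G D, (forall v, outdeg D v < k) &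
                        n_even_eulerian D != n_odd_eulerian D].

Definition AT_number_is (G : rel V) (k : nat) :=
  AT_good G k /\ (forall j, j < k -> ~ AT_good G j).
End Defs.

(* Orient every edge of T towards a fixed root r of degree at least 3 and the
   outer cycle C cyclically; every vertex then has outdegree at most 2.  Take
   the potential equal to the depth on internal vertices and to #|V| on
   leaves: cycle arcs preserve it and tree arcs strictly decrease it, so a
   balanced set of arcs uses cycle arcs only, and balance along C makes it
   empty or all of C.  Thus the only Eulerian subdigraphs are the empty one and
   C, both even when |C| is even, and AT(H) <= 3.  Conversely the degree
   conditions force |C| >= 3, so H has |V| - 1 + |C| > |V| edges and no
   orientation of H has maximum outdegree at most 1. *)

From mathcomp Require Import all_boot zify.
Set Implicit Arguments. Unset Strict Implicit. Unset Printing Implicit Defensive.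

Section Digraphs.
Variable V : finType.
Implicit Types (e G D : rel V) (S : {set V * V}).

Definition arcs e : {set V * V} := [set a | e a.1 a.2].

Definition balanced S :=
  [forall v, #|[set a in S | a.1 == v]| == #|[set a in S | a.2 == v]|].

Lemma sum_outdeg e : \sum_v outdeg e v = #|arcs e|.
Proof.
rewrite -sum1_card (partition_big fst xpredT) //=; apply: eq_bigr => v _.
rewrite /outdeg -sum1_card (reindex (pair v)) /=.
  by apply: eq_bigl => u; rewrite !inE eqxx andbT.
exists snd => [u _ //|[x u]]; rewrite !inE /= => /andP [_ /eqP ->] //.
Qed.

Lemma card_arcs_le e k : (forall v, outdeg e v <= k) -> #|arcs e| <= k * #|V|.
Proof.
move=> le_k; rewrite -sum_outdeg mulnC -sum_nat_const.
by apply: leq_sum => v _; apply: le_k.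
Qed.

Lemma card_arcs_orientation G D :
  symmetric G -> is_orientation G D -> #|arcs G| = (#|arcs D|).*2.
Proof.
move=> G_sym orD; pose swap (a : V * V) := (a.2, a.1).
have swapK : involutive swap by case.
have -> : arcs G = arcs D :|: swap @^-1: arcs D.
  apply/setP => -[x y]; rewrite !inE /=; have [DG GD] := orD x y.
  apply/idP/orP => [/GD -> | [/DG // | ]]; first by case: (D y x); [right | left].
  by rewrite G_sym => /(proj1 (orD y x)).
rewrite -addnn -{2}(@card_preimset _ swap (arcs D) (inv_inj swapK)); apply/eqP.
rewrite (leq_card_setU _ _).2 disjoints_subset; apply/subsetP => -[x y].
by rewrite !inE /= => Dxy; case: (orD x y) => DG /(_ (DG Dxy)) <-.
Qed.

Lemma balanced_sum S (phi : V -> nat) : balanced S ->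
  \sum_(a in S) phi a.1 = \sum_(a in S) phi a.2.
Proof.
have sum_proj (p : V * V -> V) :
    \sum_(a in S) phi (p a) = \sum_v #|[set a in S | p a == v]| * phi v.
  rewrite (partition_big p xpredT) //; apply: eq_bigr => v _.
  by rewrite -sum_nat_cond_const; apply: eq_bigr => a /andP [_ /eqP ->].
by move=> /forallP bal; rewrite !sum_proj; apply: eq_bigr => v _; rewrite (eqP (bal v)).
Qed.

Lemma balanced_potential S (phi : V -> nat) (P : pred (V * V)) : balanced S ->
  (forall a, a \in S -> phi a.2 <= phi a.1 ?= iff P a) -> {subset S <= P}.
Proof.
move=> /(balanced_sum phi) sum_eq /leqif_sum le_sum a aS.
by move: (le_sum).2; rewrite sum_eq eqxx => /esym/forallP/(_ a); rewrite aS.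
Qed.

Lemma balanced_graph_invariant S (f : V -> V) : injective f -> balanced S ->
  S \subset [set (x, f x) | x : V] ->
  forall x, ((f x, f (f x)) \in S) = ((x, f x) \in S).
Proof.
move=> f_inj /forallP bal /subsetP S_graph x.
have card_eq c : #|[set a in S | a == c]| = (c \in S).
  have [cS | /negbTE cS] /= := boolP (c \in S); [apply: (@eq_card1 _ c) | apply: eq_card0];
    by move=> a; rewrite !inE andbC; case: eqP => // ->.
have card_graph v (p : V * V -> V) w : (forall u, (p (u, f u) == w) = (u == v)) ->
    #|[set a in S | p a == w]| = ((v, f v) \in S).
  move=> p_eq; rewrite -card_eq; apply: eq_card => a; rewrite !inE.
  have [aS | //] := boolP (a \in S).
  case/imsetP: (S_graph a aS) => u _ ->; rewrite p_eq xpair_eqE /=.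
  by case: eqP => // ->; rewrite eqxx.
have := eqP (bal (f x)); rewrite (card_graph (f x) fst) // (card_graph x snd) => [|u].
  by case: (_ \in S); case: (_ \in S).
exact: (inj_eq f_inj).
Qed.

Lemma AT_goodW G j k : j <= k -> AT_good G j -> AT_good G k.
Proof.
move=> le_jk [D [orD out_lt EO]]; exists D; split => // v.
exact: leq_trans (out_lt v) le_jk.
Qed.

End Digraphs.

Section RootedTree.
Variables (V : finType) (t : rel V).
Hypothesis t_sym : symmetric t.
Hypothesis t_irr : irreflexive t.
Hypothesis t_conn : forall x y : V, connect t x y.
Hypothesis t_acyclic : forall (x : V) (p : seq V), uniq (x :: p) -> 2 <= size p ->
  ~~ cycle t (x :: p).
Variable r : V.

Definition reachable_in (v : V) (n : nat) : bool :=
  [exists s : n.-tuple V, path t r s && (last r s == v)].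

Lemma reachable_in_ex v : exists n, reachable_in v n.
Proof.
have /connectP [s s_path ->] := t_conn r v.
by exists (size s); apply/existsP; exists (in_tuple s); rewrite /= s_path eqxx.
Qed.

Definition depth v := ex_minn (reachable_in_ex v).

Lemma depth_root : depth r = 0.
Proof.
rewrite /depth; case: ex_minnP => m _ /(_ 0) m_min; apply/eqP; rewrite -leqn0 m_min //.
by apply/existsP; exists [tuple]; rewrite /= eqxx.
Qed.

Lemma depth_eq0 v : (depth v == 0) = (v == r).
Proof.
apply/idP/eqP => [|->]; last by rewrite depth_root.
rewrite /depth; case: ex_minnP => -[|//] /existsP [s /andP [_ /eqP <-]] _ _.
by case: s => -[].
Qed.

Lemma depth_edge u v : t u v -> depth v <= (depth u).+1.
Proof.
move=> tuv; rewrite {2}/depth; case: ex_minnP => n /existsP [s /andP [s_path /eqP s_u]] _.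
rewrite /depth; case: ex_minnP => m _; apply.
apply/existsP; exists [tuple of rcons s v].
by rewrite /= rcons_path last_rcons s_path s_u tuv eqxx.
Qed.

Lemma exists_lower_neighbour v : v != r -> exists2 u, t v u & depth u < depth v.
Proof.
rewrite -depth_eq0 /depth; case: ex_minnP => n /existsP [s] + n_min.
case/lastP: (tval s) (size_tuple s) => [<- //|s' u].
rewrite rcons_path last_rcons size_rcons => <- /andP [/andP [s'_path t_u] /eqP <-] _.
exists (last r s'); first by rewrite t_sym.
case: ex_minnP => k _ /(_ (size s')); rewrite ltnS; apply.
by apply/existsP; exists (in_tuple s'); rewrite /= s'_path eqxx.
Qed.

Definition parent v := odflt v [pick u | t v u && (depth u < depth v)].

Lemma parent_root : parent r = r.
Proof. by rewrite /parent; case: pickP => //= u; rewrite depth_root ltn0 andbF. Qed.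

Lemma parentP v : v != r -> t v (parent v) /\ depth (parent v) < depth v.
Proof.
move=> vr; rewrite /parent; case: pickP => [u /andP [] //|no_lower].
by case: (exists_lower_neighbour vr) => u tvu lt_u; move: (no_lower u); rewrite /= tvu lt_u.
Qed.

Lemma depth_parent v : depth (parent v) = (depth v).-1.
Proof.
have [->|vr] := eqVneq v r; first by rewrite parent_root depth_root.
have [tvp lt_pv] := parentP vr; have := depth_edge tvp; rewrite t_sym in tvp.
by have := depth_edge tvp; lia.
Qed.

Lemma depth_iter_parent v k : depth (iter k parent v) = depth v - k.
Proof. by elim: k => [|k IHk] /=; rewrite ?subn0 // depth_parent IHk subnS. Qed.

Lemma iter_parent_depth v : iter (depth v) parent v = r.
Proof. by apply/eqP; rewrite -depth_eq0 depth_iter_parent subnn. Qed.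

Lemma iter_parent_edge v k : k < depth v -> t (iter k parent v) (iter k.+1 parent v).
Proof.
move=> lt_k; rewrite iterS; apply: (proj1 (parentP _)).
by rewrite -depth_eq0 depth_iter_parent -lt0n subn_gt0.
Qed.

Lemma uniq_ancestors v n : n <= (depth v).+1 -> uniq (traject parent v n).
Proof.
elim: n => // n IHn le_n; rewrite trajectSr rcons_uniq IHn ?andbT 1?ltnW //.
apply/trajectP => -[k lt_kn /(congr1 depth)]; rewrite !depth_iter_parent; lia.
Qed.

Lemma depth_lt_card v : depth v < #|V|.
Proof.
have /card_uniqP := uniq_ancestors (leqnn (depth v).+1).
by rewrite size_traject => <-; apply: max_card.
Qed.

Lemma path_ancestors v n : n <= depth v -> path t v (traject parent (parent v) n).
Proof.
elim: n => // n IHn lt_n; rewrite trajectSr rcons_path IHn 1?ltnW //.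
by rewrite last_traject -iterSr iter_parent_edge.
Qed.

Lemma path_ancestors_rev v n : n <= depth v ->
  path t (iter n parent v) (rev (traject parent v n)).
Proof.
elim: n => // n IHn lt_n; rewrite trajectSr rev_rcons /= IHn 1?ltnW // andbT.
by rewrite t_sym iter_parent_edge.
Qed.

Lemma tree_edge_parent x y : t x y -> y = parent x \/ x = parent y.
Proof.
move=> txy; have [|ypx] := eqVneq y (parent x); first by left.
have [|xpy] := eqVneq x (parent y); [by right | exfalso].
(* Take i minimal such that the i-th ancestor of x is an ancestor of y: the two
   ancestor paths and the edge xy then close a cycle of length at least 3. *)
pose common i := [exists m : 'I_(depth y).+1, iter i parent x == iter m parent y].
have common_root : common (depth x).
  by apply/existsP; exists ord_max; rewrite /= !iter_parent_depth.
case: (ex_minnP (ex_intro common _ common_root)) => i /existsP [[j /=]].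
rewrite ltnS => le_j /eqP meet min_i.
have le_i : i <= depth x := min_i _ common_root.
have ij2 : 2 <= i + j.
  case: i j meet {min_i le_i le_j} => [|[|i]] [|[|j]] //= meet; try lia.
  - by move: txy; rewrite meet t_irr.
  - by move: xpy; rewrite meet eqxx.
  - by move: ypx; rewrite meet eqxx.
have disjoint_branches : ~~ has (mem (traject parent x i.+1)) (rev (traject parent y j)).
  rewrite has_rev; apply/hasPn => _ /trajectP [l lt_lj ->].
  apply/trajectP => -[k lt_ki eq_kl].
  have /min_i le_ik : common k.
    by apply/existsP; exists (inord l); rewrite inordK ?eq_kl //; lia.
  have /(congr1 depth) : iter l parent y = iter j parent y.
    by rewrite -meet eq_kl (_ : k = i) //; lia.
  by rewrite !depth_iter_parent; lia.
have := @t_acyclic x (traject parent (parent x) i ++ rev (traject parent y j)).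
rewrite -cat_cons -[x :: _]/(traject parent x i.+1) cat_uniq disjoint_branches.
rewrite rev_uniq !uniq_ancestors //; last by lia.
rewrite size_cat size_rev !size_traject => /(_ isT ij2) /negP; apply.
rewrite /= rcons_cat cat_path path_ancestors // last_traject meet rcons_path.
rewrite path_ancestors_rev //=; case: j {meet le_j ij2 disjoint_branches} => [|j] /=.
  by rewrite t_sym.
by rewrite rev_cons last_rcons t_sym.
Qed.

Definition toward_root x y := (x != r) && (y == parent x).

Lemma toward_root_orientation : is_orientation t toward_root.
Proof.
have no_back u : u != r -> toward_root (parent u) u = false.
  move=> ur; apply/nandP; right; apply/eqP => /(congr1 depth).
  by rewrite !depth_parent; move: ur; rewrite -depth_eq0; lia.
have parent_edge_root u : t u (parent u) -> u != r.
  by apply: contraTneq => ->; rewrite parent_root t_irr.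
move=> x y; split => [/andP [xr /eqP ->] | txy]; first by case: (parentP xr).
case: (tree_edge_parent txy) => [y_def | x_def].
  have xr : x != r by apply: parent_edge_root; rewrite -y_def.
  by rewrite y_def no_back // /toward_root xr eqxx.
have yr : y != r by apply: parent_edge_root; rewrite -x_def t_sym.
by rewrite x_def no_back // /toward_root yr eqxx.
Qed.

Lemma card_arcs_toward_root : #|arcs toward_root| = #|V|.-1.
Proof.
rewrite -(cardsC1 r) -(card_imset _ (fun x y (e : (x, parent x) = (y, parent y)) => congr1 fst e)).
apply: eq_card => -[x y]; rewrite !inE /=; apply/andP/imsetP => [[xr /eqP ->] | [z]].
  by exists x; rewrite ?inE.
by rewrite !inE => zr [-> ->].
Qed.

Lemma card_tree_arcs : #|arcs t| = (#|V|.-1).*2.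
Proof.
by rewrite (card_arcs_orientation t_sym toward_root_orientation) card_arcs_toward_root.
Qed.

End RootedTree.

Section HalinGraph.
Variables (V : finType) (H T : rel V) (C : seq V) (r : V).
Hypothesis T_sym : symmetric T.
Hypothesis T_irr : irreflexive T.
Hypothesis T_conn : forall x y : V, connect T x y.
Hypothesis T_acyclic : forall (x : V) (p : seq V), uniq (x :: p) -> 2 <= size p ->
  ~~ cycle T (x :: p).
Hypothesis T_deg_neq2 : forall v, deg T v != 2.
Hypothesis r_deg : 3 <= deg T r.
Hypothesis C_uniq : uniq C.
Hypothesis mem_C : forall v, (v \in C) = (deg T v == 1).
Hypothesis H_def : forall x y, H x y = T x y || cyc_adj C x y.

Local Notation parent := (parent T_conn r).
Local Notation depth := (depth T_conn r).
Local Notation toward_root := (toward_root T_conn r).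

Lemma root_notin_C : r \notin C.
Proof. by rewrite mem_C; apply: contraTneq r_deg => ->. Qed.

Lemma leaf_edge_parent x y : x \in C -> T x y -> y = parent x.
Proof.
move=> xC txy; have xr : x != r by apply: contraTneq xC => ->; apply: root_notin_C.
have [txp _] := parentP T_sym T_conn xr.
move: xC; rewrite mem_C => /cards1P [z nbr_x].
have : y \in [set u | T x u] by rewrite inE.
have : parent x \in [set u | T x u] by rewrite inE.
by rewrite nbr_x !inE => /eqP -> /eqP ->.
Qed.

Lemma parent_notin_C x : parent x \notin C.
Proof.
have [->|xr] := eqVneq x r; first by rewrite parent_root root_notin_C.
have [txp lt_px] := parentP T_sym T_conn xr.
apply/negP => pC; rewrite T_sym in txp.
move: lt_px; rewrite {2}(leaf_edge_parent pC txp) !depth_parent //; lia.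
Qed.

Lemma tree_edge_notin_C x y : T x y -> (x \notin C) || (y \notin C).
Proof.
by case/(tree_edge_parent T_sym T_irr T_conn T_acyclic r) => ->; rewrite parent_notin_C ?orbT.
Qed.

Lemma size_C_ge3 : 3 <= size C.
Proof.
have deg_sum : \sum_v deg T v = (#|V|.-1).*2.
  by rewrite -(card_tree_arcs T_sym T_irr T_conn T_acyclic r) -sum_outdeg.
have deg_ge v : 3 <= deg T v + (v \in C).*2.
  have [vC | vC] := boolP (v \in C); first by move: vC; rewrite mem_C => /eqP ->.
  rewrite /= addn0; have [-> // | vr] := eqVneq v r.
  have : 0 < deg T v.
    by apply/card_gt0P; exists (parent v); rewrite inE; case: (parentP T_sym T_conn vr).
  by move: vC (T_deg_neq2 v); rewrite mem_C; lia.
have C_lt_V : size (r :: C) <= #|V|.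
  have /card_uniqP <- : uniq (r :: C) by rewrite /= root_notin_C C_uniq.
  exact: max_card.
have sum_C : \sum_v (v \in C : nat) = size C.
  by rewrite -(card_uniqP C_uniq) -sum1_card [RHS]big_mkcond.
have : \sum_(v : V) 3 <= \sum_v (deg T v + (v \in C) + (v \in C)).
  by apply: leq_sum => v _; rewrite -addnA addnn; apply: deg_ge.
rewrite !big_split /= deg_sum sum_C sum_nat_const (@eq_card V xpredT V (fun=> erefl)).
by move: C_lt_V => /=; lia.
Qed.

Lemma next_next_C x : x \in C -> next C (next C x) != x.
Proof.
case/rot_to => i s rot_C; rewrite -!(next_rot i C_uniq) rot_C.
have := size_C_ge3; have := C_uniq; rewrite -(rot_uniq i) -(size_rot i) rot_C.
case: s {rot_C} => [|a [|b s]] //= /andP [].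
rewrite !inE !negb_or => /and3P [xa xb _] _ _ /=.
by rewrite eqxx (eq_sym a) (negbTE xa) eqxx eq_sym.
Qed.

Definition cycle_orient x y := (x \in C) && (y == next C x).

Definition halin_orient x y := cycle_orient x y || toward_root x y.

Lemma halin_orient_C x y : y \in C -> halin_orient x y = cycle_orient x y.
Proof.
move=> yC; rewrite /halin_orient /toward_root.
case: (y =P parent x) => [y_def | _]; last by rewrite andbF orbF.
by move: yC; rewrite y_def (negbTE (parent_notin_C x)).
Qed.

Lemma halin_orient_T x y : T x y -> halin_orient x y = toward_root x y.
Proof.
move=> /tree_edge_notin_C xy_notC; rewrite /halin_orient /cycle_orient.
case: (boolP (x \in C)) xy_notC => //= xC.
move=> yC; rewrite (_ : y == next C x = false) //.
by apply: contraNF yC => /eqP ->; rewrite mem_next.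
Qed.

Lemma halin_orientation : is_orientation H halin_orient.
Proof.
have T_orient := toward_root_orientation T_sym T_irr T_conn T_acyclic r.
move=> x y; split; rewrite H_def.
  case/orP => [/andP [xC /eqP ->] | /(T_orient x y).1 -> //].
  by rewrite /cyc_adj xC mem_next xC eqxx orbT.
case/orP => [txy | /and3P [xC yC adj]].
  by rewrite (halin_orient_T txy) halin_orient_T 1?T_sym // (T_orient x y).2.
rewrite !halin_orient_C // /cycle_orient xC yC /=.
by case/orP: adj => /eqP ->; rewrite eqxx eq_sym ?(negbTE (next_next_C _)).
Qed.

Lemma outdeg_halin_orient v : outdeg halin_orient v <= 2.
Proof.
apply: leq_trans (_ : #|[set next C v; parent v]| <= 2); last by rewrite cards2 ltnS leq_b1.
apply: subset_leq_card; apply/subsetP => u; rewrite !inE.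
by case/orP => /andP [_ ->]; rewrite ?orbT.
Qed.

Lemma card_arcs_cycle_orient : #|arcs cycle_orient| = size C.
Proof.
have pair_inj : injective (fun x => (x, next C x)) by move=> x y [].
rewrite -(card_uniqP C_uniq) -(card_imset (mem C) pair_inj); apply: eq_card => -[x y].
rewrite inE /=; apply/andP/imsetP => [[xC /eqP ->] | [z zC [-> ->]]]; first by exists x.
by rewrite zC.
Qed.

Lemma card_arcs_halin_orient : #|arcs halin_orient| = #|V|.-1 + size C.
Proof.
rewrite -card_arcs_cycle_orient -(card_arcs_toward_root T_conn r) addnC.
have -> : arcs halin_orient = arcs cycle_orient :|: arcs toward_root.
  by apply/setP => a; rewrite !inE.
apply/eqP; rewrite (leq_card_setU _ _).2 disjoints_subset; apply/subsetP => -[x y].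
rewrite !inE /= => /andP [xC /eqP ->]; apply/nandP; right; apply/eqP => next_parent.
by move: (parent_notin_C x); rewrite -next_parent mem_next xC.
Qed.

Lemma H_sym : symmetric H.
Proof.
move=> x y; rewrite !H_def T_sym /cyc_adj andbCA.
by congr (_ || (_ && (_ && _))); apply: orbC.
Qed.

Lemma card_arcs_H : #|arcs H| = (#|V|.-1 + size C).*2.
Proof. by rewrite (card_arcs_orientation H_sym halin_orientation) card_arcs_halin_orient. Qed.

Lemma halin_not_AT_good2 : ~ AT_good H 2.
Proof.
case=> D [orD out_lt _]; have := card_arcs_orientation H_sym orD.
have := card_arcs_le (k := 1) (fun v => out_lt v); rewrite card_arcs_H mul1n.
by have := size_C_ge3; lia.
Qed.

Definition leaf_potential v := if v \in C then #|V| else depth v.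

Lemma leaf_potential_halin_orient x y : halin_orient x y ->
  leaf_potential y <= leaf_potential x ?= iff cycle_orient x y.
Proof.
rewrite /halin_orient /leaf_potential; case/orP => [cyc | /andP [xr /eqP ->]].
  by case/andP: (cyc) => xC /eqP y_def; rewrite {1}y_def mem_next xC; apply/leqif_refl.
have not_cyc : cycle_orient x (parent x) = false.
  by apply: contraNF (parent_notin_C x) => /andP [xC /eqP ->]; rewrite mem_next.
rewrite (negbTE (parent_notin_C x)) not_cyc.
suff lt_px : depth (parent x) < (if x \in C then #|V| else depth x).
  by split; [apply: ltnW | apply: ltn_eqF].
case: ifP => _; first exact: depth_lt_card.
by case: (parentP T_sym T_conn xr).
Qed.

Lemma eulerian_halin_orient S :
  eulerian_sub halin_orient S -> S = set0 \/ S = arcs cycle_orient.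
Proof.
case/andP => /subsetP S_arcs bal.
have S_cycle : S \subset arcs cycle_orient.
  apply/subsetP => a aS; rewrite inE.
  apply: (balanced_potential (P := [pred b | cycle_orient b.1 b.2]) bal _ aS) => b bS.
  by apply: leaf_potential_halin_orient; have := S_arcs b bS; rewrite inE.
have S_graph : S \subset [set (x, next C x) | x : V].
  apply: subset_trans S_cycle _; apply/subsetP => -[x y]; rewrite inE => /andP [_ /eqP /= ->].
  by apply/imsetP; exists x.
have invS := balanced_graph_invariant (can_inj (prev_next C_uniq)) bal S_graph.
have [-> | [[x0 y0] a0S]] := set_0Vmem S; [by left | right].
have /andP [x0C /eqP y0_def] : cycle_orient x0 y0.
  by have := subsetP S_cycle _ a0S; rewrite inE.
apply/eqP; rewrite eqEsubset S_cycle; apply/subsetP => -[x y].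
rewrite inE => /andP [xC /eqP /= ->].
have x0x : fconnect (next C) x0 x by rewrite (fconnect_cycle (cycle_next C_uniq) x0C).
have := fconnect_invariant (k := fun z => (z, next C z) \in S) _ x0x.
by rewrite -y0_def a0S => <- // z; apply/eqP; apply: invS.
Qed.

Lemma halin_AT_good3 : ~~ odd (size C) -> AT_good H 3.
Proof.
move=> even_C; exists halin_orient; split; first exact: halin_orientation.
  by move=> v; rewrite ltnS outdeg_halin_orient.
have -> : n_odd_eulerian halin_orient = 0.
  apply: eq_card0 => S; rewrite !inE; apply/negbTE/andP.
  by case=> /eulerian_halin_orient [-> | ->]; rewrite ?cards0 ?card_arcs_cycle_orient; apply/negP.
rewrite -lt0n; apply/card_gt0P; exists set0; rewrite !inE cards0 andbT /eulerian_sub sub0set.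
by apply/forallP => v; rewrite !eq_card0 // => a; rewrite !inE.
Qed.

End HalinGraph.

Theorem lemma3p4 (V : finType) (H T : rel V) (C : seq V) :
  halin_decomp H T C -> ~~ odd (size C) -> AT_number_is H 3.
Proof.
move=> [[[T_sym T_irr] T_conn T_acyclic] [T_deg_neq2 [r r_deg]] [C_uniq mem_C] _ H_def] even_C.
split.
  exact: (halin_AT_good3 T_sym T_irr T_conn T_acyclic T_deg_neq2 r_deg C_uniq mem_C H_def even_C).
move=> j lt_j3 /(AT_goodW (k := 2)) AT2.
apply: (halin_not_AT_good2 T_sym T_irr T_conn T_acyclic T_deg_neq2 r_deg C_uniq mem_C H_def).
by apply: AT2; rewrite -ltnS.
Qed.
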